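(* Let $q>r\geq 1$ be integers and $\alpha$ a real number. Suppose that for all positive integers $N$ we have $f_{q,r}(N)\geq N^{\alpha-\varepsilon(N)}$, for some function $\varepsilon$ with $\lim_{N\to\infty}\varepsilon(N)=0$. Then $f_{q,r}(N)\geq N^{\alpha}$ for all positive integers $N$.
   Context: For a $q$-edge-colored complete graph $K$ on vertex set $[N]$ with its natural order, $f_{q,r}(K)$ is the maximum number of vertices of a monotone path (vertices strictly increasing in traversal order) in $K$ whose edges use at most $r$ colors; $f_{q,r}(N)$ is the minimum of $f_{q,r}(K)$ over all such $q$-edge-colored $K$ on $N$ vertices. *)

From mathcomp Require Import all_boot.
Set Implicit Arguments. Unset Strict Implicit. Unset Printing Implicit Defensive.

(* A q-edge-coloring of the complete graph K_N on vertex set 'I_N (= [N],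
   with its natural order).  The color of the edge {x,y} with x < y is
   c (x, y); values on pairs with x >= y are irrelevant (never used). *)
Definition coloring (q N : nat) := {ffun 'I_N * 'I_N -> 'I_q}.

Definition path_colors q N (c : coloring q N) (s : seq 'I_N) : seq 'I_q :=
  undup [seq c (e.1, e.2) | e <- zip s (behead s)].

(* A monotone path (vertices strictly increasing in traversal order)
   visiting exactly the vertices of S; it is the increasing enumeration of S. *)
Definition mono_path N (S : {set 'I_N}) : seq 'I_N := enum S.

Definition fK (q r N : nat) (c : coloring q N) : nat :=
  \max_(S : {set 'I_N} | size (path_colors c (mono_path S)) <= r) #|S|.

(* f_{q,r}(N): minimum of f_{q,r}(K) over all q-edge-colorings K of K_N.
   (The identity N is harmless since f_{q,r}(K) <= N.) *)
Definition fqr (q r N : nat) : nat :=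
  \big[minn/N]_(c : coloring q N) fK r c.

From mathcomp Require Import all_boot.
From Stdlib Require Import Reals Lra.
Set Implicit Arguments. Unset Strict Implicit.

(* Substituting a q-coloring of K_M into every vertex of a q-coloring of K_N
   (lexicographic product) yields a coloring of K_(NM) in which a monotone
   path with at most r colors projects onto such a path of K_N and meets each
   substituted copy of K_M in such a path; hence f(NM) <= f(N) f(M).  Then
   N^(k (alpha - eps(N^k))) <= f(N^k) <= f(N)^k, and taking k-th roots and
   letting k -> oo gives N^alpha <= f(N). *)

Section AdjacentInSorted.
Variables (T : eqType) (lt : rel T).
Hypotheses (lt_trans : transitive lt) (lt_irr : irreflexive lt).

Lemma zip_behead_sortedP (s : seq T) x y : sorted lt s ->
  reflect [/\ x \in s, y \in s, lt x y & {in s, forall z, ~~ (lt x z && lt z y)}]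
          ((x, y) \in zip s (behead s)).
Proof.
elim: s => [|a [|b t] IH] srt_s.
- by apply: ReflectF; case.
- by apply: ReflectF; rewrite !inE => -[/eqP-> /eqP->]; rewrite lt_irr.
have /allP a_min := order_path_min lt_trans srt_s.
have srt_t := path_sorted srt_s.
have /allP b_min := order_path_min lt_trans srt_t.
have t_sub : {subset b :: t <= [:: a, b & t]} by move=> z zt; rewrite inE zt orbT.
have lt_a_false z : z \in b :: t -> lt z a = false.
  by move=> zt; apply/negP => /(lt_trans (a_min z zt)); rewrite lt_irr.
apply: (iffP idP) => [ | [xs ys xy btw]].
  rewrite /= in_cons => /orP[/eqP[-> ->] | /(IH srt_t)[xt yt xy btw]].
  - split; rewrite ?inE ?eqxx ?orbT ?a_min ?mem_head //.
    move=> z /predU1P[-> | /predU1P[-> | zt]]; rewrite ?lt_irr ?andbF //.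
    by apply/negP => /andP[_ /(lt_trans (b_min z zt))]; rewrite lt_irr.
  - split; [exact: t_sub | exact: t_sub | done | ].
    by move=> z /predU1P[-> | ]; [rewrite lt_a_false | exact: btw].
rewrite /= in_cons; move: xs ys.
case/predU1P => [xa | xt] /predU1P[ya | yt].
- by move: xy; rewrite xa ya lt_irr.
- move: yt => /predU1P[yb | yt']; first by rewrite xa yb eqxx.
  by have := btw b (t_sub _ (mem_head _ _)); rewrite xa a_min ?mem_head // b_min.
- by move: xy; rewrite ya lt_a_false.
- apply/orP; right; apply/(IH srt_t); split=> // z zt.
  exact/btw/t_sub.
Qed.

End AdjacentInSorted.

Lemma sorted_enum_set n (S : {set 'I_n}) : sorted (relpre val ltn) (enum S).
Proof.
rewrite -sorted_map -[enum S](eq_filter (mem_enum _)).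
rewrite -(eq_filter (mem_map val_inj _)) -filter_map.
by rewrite (sorted_filter ltn_trans) // unlock val_ord_enum iota_ltn_sorted.
Qed.

Lemma zip_behead_enumP n (S : {set 'I_n}) (x y : 'I_n) :
  reflect [/\ x \in S, y \in S, x < y & forall z, z \in S -> ~~ (x < z < y)]
          ((x, y) \in zip (enum S) (behead (enum S))).
Proof.
apply: (iffP (zip_behead_sortedP _ _ _ _ (sorted_enum_set S))).
- by move=> y' x' z; exact: ltn_trans.
- by move=> x'; exact: ltnn.
- by rewrite !mem_enum => -[xS yS xy btw]; split=> // z zS; apply: btw; rewrite mem_enum.
- by move=> [xS yS xy btw]; split; rewrite ?mem_enum // => z; rewrite mem_enum; apply: btw.
Qed.

Lemma mem_path_colors q N (c : coloring q N) s e :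
  e \in zip s (behead s) -> c e \in path_colors c s.
Proof. by move=> es; rewrite mem_undup; apply/mapP; exists e => //; case: e es. Qed.

Lemma size_path_colors_sub q N M (c : coloring q N) (c' : coloring q M) s s' :
  {subset path_colors c s <= path_colors c' s'} ->
  size (path_colors c s) <= size (path_colors c' s').
Proof. exact: uniq_leq_size (undup_uniq _). Qed.

Lemma fK_ge_card q r N (c : coloring q N) (S : {set 'I_N}) :
  size (path_colors c (enum S)) <= r -> #|S| <= fK r c.
Proof. exact: leq_bigmax_cond. Qed.

Lemma fK_le_N q r N (c : coloring q N) : fK r c <= N.
Proof. by apply/bigmax_leqP => S _; rewrite -[N in _ <= N]card_ord max_card. Qed.

Lemma fqr_le_fK q r N (c : coloring q N) : fqr q r N <= fK r c.
Proof.
rewrite /fqr; elim: (index_enum _) (mem_index_enum c) => // d s IH.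
rewrite inE big_cons => /predU1P[<- | cs]; first exact: geq_minl.
by rewrite geq_min IH ?orbT.
Qed.

Lemma fqr_le_N q r N : fqr q r N <= N.
Proof. by rewrite /fqr; elim/big_ind: _ => // [x y xN _|c _]; rewrite ?geq_min ?xN ?fK_le_N. Qed.

Lemma fqr_attained q r N : 0 < q -> exists c : coloring q N, fK r c <= fqr q r N.
Proof.
move=> q_gt0; rewrite /fqr; elim/big_ind: _ => [|x y [c cx] [d dy] | c _].
- by exists [ffun _ => Ordinal q_gt0]; exact: fK_le_N.
- by case: leqP; [exists c | exists d].
- by exists c.
Qed.

Section ProductColoring.
Variables (q N M : nat).
Implicit Types x y z : 'I_(N * M).

Lemma ord_mul_gt0r x : 0 < M.
Proof. by case: M x => [|M'] [x]; rewrite ?muln0. Qed.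

Lemma hi_subproof x : x %/ M < N.
Proof. by rewrite ltn_divLR ?(ord_mul_gt0r x). Qed.

Lemma lo_subproof x : x %% M < M.
Proof. exact/ltn_pmod/(ord_mul_gt0r x). Qed.

Definition hi x : 'I_N := Ordinal (hi_subproof x).
Definition lo x : 'I_M := Ordinal (lo_subproof x).

Lemma hi_lo_inj x y : hi x = hi y -> lo x = lo y -> x = y.
Proof.
move=> /(congr1 val) /= hxy /(congr1 val) /= lxy.
by apply: val_inj; rewrite /= (divn_eq x M) (divn_eq y M) hxy lxy.
Qed.

Lemma leq_hi x y : x <= y -> hi x <= hi y.
Proof. exact: leq_div2r. Qed.

Lemma ltn_of_hi x y : hi x < hi y -> x < y.
Proof. by apply: contraTT; rewrite -!leqNgt; exact: leq_hi. Qed.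

Lemma ltn_lo x y : hi x = hi y -> (x < y) = (lo x < lo y).
Proof.
move=> /(congr1 val) /= hxy.
by rewrite [in LHS](divn_eq x M) [in LHS](divn_eq y M) hxy ltn_add2l.
Qed.

Variables (c1 : coloring q N) (c2 : coloring q M).

Definition prod_coloring : coloring q (N * M) :=
  [ffun e => if hi e.1 == hi e.2 then c2 (lo e.1, lo e.2) else c1 (hi e.1, hi e.2)].

Section Blocks.
Variable S : {set 'I_(N * M)}.

Definition block (a : 'I_N) := [set x in S | hi x == a].

Lemma path_colors_hi_sub :
  {subset path_colors c1 (enum (hi @: S)) <= path_colors prod_coloring (enum S)}.
Proof.
move=> col; rewrite mem_undup => /mapP[[a a'] /zip_behead_enumP[aS a'S aa' btw] ->].
have /imsetP[x0 x0S hx0] := aS; have /imsetP[y0 y0S hy0] := a'S.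
have x0_blk : x0 \in block a by rewrite inE x0S hx0 eqxx.
have y0_blk : y0 \in block a' by rewrite inE y0S hy0 eqxx.
have [x x_blk x_max] := @arg_maxnP _ x0 (mem (block a)) val x0_blk.
have [y y_blk y_min] := @arg_minnP _ y0 (mem (block a')) val y0_blk.
move: x_blk y_blk => /setIdP[xS /eqP hx] /setIdP[yS /eqP hy].
have -> : c1 (a, a') = prod_coloring (x, y).
  by rewrite ffunE /= hx hy ifN // -val_eqE neq_ltn aa'.
apply/mem_path_colors/zip_behead_enumP; split=> //; first by rewrite ltn_of_hi ?hx ?hy.
move=> z zS; apply/negP => /andP[xz zy].
have := leq_hi (ltnW xz); have := leq_hi (ltnW zy); rewrite hx hy => za' az.
have [hz | /eqP hz] := eqVneq (hi z) a.
  have z_blk : z \in block a by rewrite inE zS hz eqxx.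
  by have := x_max z z_blk; rewrite /= leqNgt xz.
have [hz' | /eqP hz'] := eqVneq (hi z) a'.
  have z_blk : z \in block a' by rewrite inE zS hz' eqxx.
  by have := y_min z z_blk; rewrite /= leqNgt zy.
have a_lt : a < hi z by rewrite ltn_neqAle az andbT; apply/eqP => /val_inj/esym/hz.
have lt_a' : hi z < a' by rewrite ltn_neqAle za' andbT; apply/eqP => /val_inj/hz'.
by have := btw (hi z) (imset_f _ zS); rewrite a_lt lt_a'.
Qed.

Lemma path_colors_block_sub a :
  {subset path_colors c2 (enum (lo @: block a)) <= path_colors prod_coloring (enum S)}.
Proof.
move=> col; rewrite mem_undup.
case/mapP => [[b b'] /zip_behead_enumP[/imsetP[x x_blk ->] /imsetP[y y_blk ->] lt_lo btw] ->].
move: x_blk y_blk; rewrite !inE => /andP[xS /eqP hx] /andP[yS /eqP hy].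
have hxy : hi x = hi y by rewrite hx hy.
have -> : c2 (lo x, lo y) = prod_coloring (x, y) by rewrite ffunE /= hxy eqxx.
apply/mem_path_colors/zip_behead_enumP; split; rewrite ?(ltn_lo hxy) // => z zS.
apply/negP => /andP[xz zy].
have hz : hi z = a.
  have := leq_hi (ltnW zy); have := leq_hi (ltnW xz); rewrite -hxy hx => az za.
  by apply/val_inj/eqP; rewrite eqn_leq za az.
have z_lo : lo z \in lo @: block a by rewrite imset_f // inE zS hz eqxx.
by have := btw _ z_lo; rewrite -!ltn_lo ?xz ?zy ?hz ?hx ?hy.
Qed.

Lemma card_hi_blocks : #|S| = \sum_(a in hi @: S) #|block a|.
Proof.
rewrite -sum1_card (partition_big_imset hi); apply: eq_bigr => a _.
by rewrite -sum1_card; apply: eq_bigl => x; rewrite inE.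
Qed.

Lemma card_lo_block a : #|lo @: block a| = #|block a|.
Proof.
apply: card_in_imset => x y; rewrite !inE => /andP[_ /eqP hx] /andP[_ /eqP hy].
by apply: hi_lo_inj; rewrite hx hy.
Qed.

End Blocks.

Lemma fK_prod_coloring r : fK r prod_coloring <= fK r c1 * fK r c2.
Proof.
apply/bigmax_leqP => S S_r.
have colors_le K (c : coloring q K) s :
    {subset path_colors c s <= path_colors prod_coloring (enum S)} ->
    size (path_colors c s) <= r.
  by move=> sub; exact: leq_trans (size_path_colors_sub sub) S_r.
rewrite card_hi_blocks (@leq_trans (\sum_(a in hi @: S) fK r c2)) //.
  apply: leq_sum => a _; rewrite -card_lo_block.
  exact/fK_ge_card/colors_le/path_colors_block_sub.
rewrite sum_nat_const leq_mul2r fK_ge_card ?orbT //.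
exact/colors_le/path_colors_hi_sub.
Qed.

End ProductColoring.

Lemma fqr_mul q r N M : 0 < q -> fqr q r (N * M) <= fqr q r N * fqr q r M.
Proof.
move=> q_gt0; have [c1 c1_min] := fqr_attained r N q_gt0.
have [c2 c2_min] := fqr_attained r M q_gt0.
apply: leq_trans (fqr_le_fK r (prod_coloring c1 c2)) _.
exact: leq_trans (fK_prod_coloring c1 c2 r) (leq_mul c1_min c2_min).
Qed.

Lemma fqr_expn q r N k : 0 < q -> fqr q r (expn N k) <= expn (fqr q r N) k.
Proof.
move=> q_gt0; elim: k => [|k IH]; first exact: fqr_le_N.
by rewrite !expnSr (leq_trans (fqr_mul r _ _ q_gt0)) ?leq_mul.
Qed.

Lemma INR_expn n k : INR (expn n k) = (INR n ^ k)%R.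
Proof. by elim: k => [|k IH] //; rewrite expnS mult_INR IH. Qed.

Lemma Rpower_le_of_pow_le (x y f : R) k : (0 < x)%R -> (0 < f)%R -> 0 < k ->
  (Rpower (x ^ k) y <= f ^ k -> Rpower x y <= f)%R.
Proof.
move=> x_gt0 f_gt0 k_gt0; rewrite -!Rpower_pow // Rpower_mult => le_k.
have k_pos : (0 < INR k)%R by apply/lt_0_INR/ltP.
have inv_k_ge0 : (0 <= / INR k)%R by apply/Rlt_le/Rinv_0_lt_compat.
have := @Rle_Rpower_l _ _ (/ INR k) inv_k_ge0 (conj (exp_pos _) le_k).
rewrite !Rpower_mult Rinv_r ?Rpower_1 //; last lra.
by rewrite Rmult_comm -Rmult_assoc Rinv_l ?Rmult_1_l //; lra.
Qed.

Lemma Rpower_le_Rlog x y f : (1 < x)%R -> (0 < f)%R -> (Rpower x y <= f <-> y <= Rlog x f)%R.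
Proof.
move=> x_gt1 f_gt0; rewrite -{1}(Rpower_Rlog x f) //; try lra; split => [le_xy | ].
  by apply: Rnot_lt_le => /(Rpower_lt x _ _ x_gt1); lra.
exact: Rle_Rpower (Rlt_le _ _ x_gt1).
Qed.

Lemma le_of_frequently_le_sub (u : nat -> R) a b : Un_cv u 0 ->
  (forall K, exists2 n, K <= n & (a - u n <= b)%R) -> (a <= b)%R.
Proof.
move=> u0 freq; apply: Rnot_lt_le => ba.
have [K u_small] := u0 (a - b)%R ltac:(lra).
have [n Kn le_ab] := freq K.
have := u_small n (leP Kn); rewrite /R_dist Rminus_0_r => /Rabs_def2; lra.
Qed.

Theorem proposition3p6 (q r : nat) (alpha : R) (eps : nat -> R) :
  (1 <= r)%N -> (r < q)%N ->
  Un_cv eps 0%R ->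
  (forall N : nat, (0 < N)%N -> (Rpower (INR N) (alpha - eps N) <= INR (fqr q r N))%R) ->
  forall N : nat, (0 < N)%N -> (Rpower (INR N) alpha <= INR (fqr q r N))%R.
Proof.
move=> _ rq eps0 f_lower N N_gt0.
have q_gt0 : (0 < q)%N by apply: leq_ltn_trans rq.
have [-> | N_neq1] := eqVneq N 1.
  have Rpower1 y : Rpower (INR 1) y = 1%R by rewrite /Rpower ln_1 Rmult_0_r exp_0.
  by have := f_lower 1 isT; rewrite !Rpower1.
have {N_neq1 N_gt0} N_gt1 : 1 < N by rewrite ltn_neqAle eq_sym N_neq1.
have N_gt1R : (1 < INR N)%R by apply: (lt_INR 1); apply/ltP.
have f_gt0 : (0 < INR (fqr q r N))%R := Rlt_le_trans _ _ _ (exp_pos _) (f_lower N (ltnW N_gt1)).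
apply/Rpower_le_Rlog => //; apply: (le_of_frequently_le_sub eps0) => K.
exists (expn N K.+1); first exact/ltnW/ltnW/(ltn_expl K.+1 N_gt1).
apply/Rpower_le_Rlog => //; apply: (@Rpower_le_of_pow_le _ _ _ K.+1) => //; first lra.
rewrite -!INR_expn; apply: Rle_trans (f_lower _ _) _.
  by rewrite expn_gt0 ltnW.
by apply/le_INR/leP/fqr_expn.
Qed.
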